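(* (Unconditional stability of the one-dimensional Crank–Nicolson collocation scheme.) Let $\mathcal A$ be the one-dimensional piecewise quadratic collocation matrix (see context) for $a<b$, $\gamma\in(0,1)$, $M\ge2$. Let $T>0$, $N\ge1$, $\tau=T/N$, and set $C_a=\frac{2(b-a)^{1-\gamma}}{1-\gamma}$. If vectors $\varepsilon^0,\varepsilon^1,\dots,\varepsilon^N\in\mathbb R^{2M-1}$ satisfy $$\Big(I+\frac{\tau}{2}\mathcal A\Big)\varepsilon^k=\Big(I-\frac{\tau}{2}\mathcal A\Big)\varepsilon^{k-1},\qquad k=1,\dots,N,$$ then $\|\varepsilon^k\|_\infty\le e^{TC_a}\|\varepsilon^0\|_\infty$ for all $k=0,1,\dots,N$. (In particular, the difference of two solutions of the scheme with the same data but different initial values is bounded in this way, for every $M$ and every $\tau$.)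
   Context: Fix real numbers $a<b$, an exponent $\gamma\in(0,1)$ and an integer $M\ge 2$. Set $h=(b-a)/M$ and $x_s=a+sh$ for $s\in\{0,\tfrac12,1,\tfrac32,\dots,M\}$. The piecewise quadratic Lagrange basis functions on $[a,b]$ are: for integers $0\le l\le M$, $\phi_l(x)=\frac{x-x_{l-1}}{h}\cdot\frac{2x-(x_l+x_{l-1})}{h}$ for $x\in[x_{l-1},x_l]\cap[a,b]$, $\phi_l(x)=\frac{x_{l+1}-x}{h}\cdot\frac{(x_{l+1}+x_l)-2x}{h}$ for $x\in[x_l,x_{l+1}]\cap[a,b]$, and $\phi_l(x)=0$ otherwise; and for $l=1,\dots,M$, $\phi_{l-\frac12}(x)=\frac{4(x-x_{l-1})(x_l-x)}{h^2}$ for $x\in[x_{l-1},x_l]$ and $0$ otherwise. For $i\in\{1,\dots,2M-1\}$ and $j\in\{0,1,\dots,2M\}$ define $$d_i=\int_a^b\frac{dy}{|x_{i/2}-y|^{\gamma}},\qquad g_{ij}=\int_a^b\frac{\phi_{j/2}(y)}{|x_{i/2}-y|^{\gamma}}\,dy .$$ The one-dimensional collocation matrix is the $(2M-1)\times(2M-1)$ matrix $\mathcal A$ with entries $A_{ij}=\delta_{ij}d_i-g_{ij}$, $i,j\in\{1,\dots,2M-1\}$. The following fact, established in earlier work, may be used: $g_{ij}>0$ for all $i,j\in\{1,\dots,2M-1\}$, and $\mathcal A$ is strictly diagonally dominant by rows. For a vector $v$, $\|v\|_\infty=\max_i|v_i|$. *)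

From Stdlib Require Import Reals Lra Lia Bool.
Local Open Scope bool_scope.
Open Scope R_scope.

Definition Rleb (x y : R) : bool := if Rle_dec x y then true else false.

Fixpoint sum1 (n : nat) (f : nat -> R) : R :=
  match n with
  | O => 0
  | S m => sum1 m f + f (S m)
  end.

Fixpoint vnorm (v : nat -> R) (n : nat) : R :=
  match n with
  | O => 0
  | S m => Rmax (vnorm v m) (Rabs (v (S m)))
  end.

Definition RInt_is (f : R -> R) (lo hi v : R) : Prop :=
  exists pr : Riemann_integrable f lo hi, RiemannInt pr = v.

(* Improper integral over [lo,hi] with a (possible) singularity at the interior
   point c:  l = lim_{e->0+} ( int_lo^{c-e} f + int_{c+e}^hi f ). *)
Definition imp_int (f : R -> R) (lo hi c l : R) : Prop :=
  forall eps, 0 < eps -> exists delta, 0 < delta /\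
    forall e, 0 < e < delta -> lo < c - e -> c + e < hi ->
      exists I1 I2, RInt_is f lo (c - e) I1 /\ RInt_is f (c + e) hi I2 /\
                    Rabs (I1 + I2 - l) < eps.

Definition hstep (a b : R) (M : nat) : R := (b - a) / INR M.
Definition node (a b : R) (M : nat) (s : R) : R := a + s * hstep a b M.

Definition phi_int (a b : R) (M : nat) (l : nat) (y : R) : R :=
  let h := hstep a b M in
  let xm := node a b M (INR l - 1) in
  let xl := node a b M (INR l) in
  let xp := node a b M (INR l + 1) in
  if Rleb a y && Rleb y b && Rleb xm y && Rleb y xl
  then ((y - xm) / h) * ((2 * y - (xl + xm)) / h)
  else if Rleb a y && Rleb y b && Rleb xl y && Rleb y xp
  then ((xp - y) / h) * (((xp + xl) - 2 * y) / h)
  else 0.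

(* phi_{l-1/2}, l = 1..M *)
Definition phi_half (a b : R) (M : nat) (l : nat) (y : R) : R :=
  let h := hstep a b M in
  let xm := node a b M (INR l - 1) in
  let xl := node a b M (INR l) in
  if Rleb xm y && Rleb y xl then 4 * (y - xm) * (xl - y) / (h * h) else 0.

(* phi_{j/2}, j = 0..2M *)
Definition phi (a b : R) (M : nat) (j : nat) (y : R) : R :=
  if Nat.even j then phi_int a b M (Nat.div2 j) y
  else phi_half a b M (Nat.div2 j + 1) y.

Definition colpt (a b : R) (M : nat) (i : nat) : R := node a b M (INR i / 2).

Definition kern (gamma x y : R) : R := / Rpower (Rabs (x - y)) gamma.

Definition Amat (d : nat -> R) (g : nat -> nat -> R) (i j : nat) : R :=
  (if Nat.eqb i j then d i else 0) - g i j.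

Definition Ca (a b gamma : R) : R := 2 * Rpower (b - a) (1 - gamma) / (1 - gamma).

From Stdlib Require Import Reals Lra Lia Bool.
From Coquelicot Require Import Coquelicot.
Open Scope R_scope.

(* Only two properties of the rows of A matter: the diagonal entry lies in
   [0, C_a], and the off-diagonal absolute row sum does not exceed it.  The
   first holds because g_ii <= d_i (since phi <= 1) and d_i <= C_a (integrate
   |x - y|^(-gamma) explicitly on each side of the singularity); the second
   is the given diagonal dominance.  Reading the scheme at a row where
   |eps^k_i| is maximal then bounds one step by the factor 1 + tau C_a, and
   N steps by (1 + tau C_a)^N <= e^(T C_a). *)

Lemma is_RInt_kern_left gamma c lo hi : 0 < gamma < 1 -> lo < hi < c ->
  is_RInt (kern gamma c) lo hi
    ((Rpower (c - lo) (1 - gamma) - Rpower (c - hi) (1 - gamma)) / (1 - gamma)).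
Proof.
  intros Hg Hh.
  set (F := fun y => - exp ((1 - gamma) * ln (c - y)) / (1 - gamma)).
  replace ((Rpower (c - lo) (1 - gamma) - Rpower (c - hi) (1 - gamma)) / (1 - gamma))
    with (minus (F hi) (F lo))
    by (unfold minus, plus, opp, F, Rpower; simpl; field; lra).
  apply (is_RInt_ext (fun y => exp (- gamma * ln (c - y)))).
  { rewrite Rmin_left, Rmax_right by lra. intros y Hy. unfold kern, Rpower.
    rewrite Rabs_right, <- exp_Ropp by lra. f_equal. ring. }
  apply (is_RInt_derive (V := R_CompleteNormedModule) F);
    rewrite Rmin_left, Rmax_right by lra; intros y Hy.
  - unfold F. auto_derive; [lra|].
    replace (c + - y) with (c - y) by ring.
    replace ((1 - gamma) * ln (c - y)) with (- gamma * ln (c - y) + ln (c - y)) by ring.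
    rewrite exp_plus, exp_ln by lra. field. lra.
  - apply (ex_derive_continuous (V := R_NormedModule)). auto_derive. lra.
Qed.

Lemma is_RInt_kern_right gamma c lo hi : 0 < gamma < 1 -> c < lo < hi ->
  is_RInt (kern gamma c) lo hi
    ((Rpower (hi - c) (1 - gamma) - Rpower (lo - c) (1 - gamma)) / (1 - gamma)).
Proof.
  intros Hg Hh.
  set (F := fun y => exp ((1 - gamma) * ln (y - c)) / (1 - gamma)).
  replace ((Rpower (hi - c) (1 - gamma) - Rpower (lo - c) (1 - gamma)) / (1 - gamma))
    with (minus (F hi) (F lo))
    by (unfold minus, plus, opp, F, Rpower; simpl; field; lra).
  apply (is_RInt_ext (fun y => exp (- gamma * ln (y - c)))).
  { rewrite Rmin_left, Rmax_right by lra. intros y Hy. unfold kern, Rpower.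
    rewrite Rabs_left, <- exp_Ropp by lra.
    replace (- (c - y)) with (y - c) by ring. f_equal. ring. }
  apply (is_RInt_derive (V := R_CompleteNormedModule) F);
    rewrite Rmin_left, Rmax_right by lra; intros y Hy.
  - unfold F. auto_derive; [lra|].
    replace (y + - c) with (y - c) by ring.
    replace ((1 - gamma) * ln (y - c)) with (- gamma * ln (y - c) + ln (y - c)) by ring.
    rewrite exp_plus, exp_ln by lra. field. lra.
  - apply (ex_derive_continuous (V := R_NormedModule)). auto_derive. lra.
Qed.

Lemma RInt_is_is_RInt_eq f lo hi I v : RInt_is f lo hi I -> is_RInt f lo hi v -> I = v.
Proof. intros [pr <-] Hv. rewrite <- RInt_Reals. exact (is_RInt_unique _ _ _ _ Hv). Qed.

Lemma RInt_is_kern_left_le gamma c lo hi I : 0 < gamma < 1 -> lo < hi < c ->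
  RInt_is (kern gamma c) lo hi I -> I <= Rpower (c - lo) (1 - gamma) / (1 - gamma).
Proof.
  intros Hg Hh HI.
  rewrite (RInt_is_is_RInt_eq _ _ _ _ _ HI (is_RInt_kern_left gamma c lo hi Hg Hh)).
  assert (0 < Rpower (c - hi) (1 - gamma)) by apply exp_pos.
  apply Rmult_le_compat_r; [apply Rlt_le, Rinv_0_lt_compat|]; lra.
Qed.

Lemma RInt_is_kern_right_le gamma c lo hi I : 0 < gamma < 1 -> c < lo < hi ->
  RInt_is (kern gamma c) lo hi I -> I <= Rpower (hi - c) (1 - gamma) / (1 - gamma).
Proof.
  intros Hg Hh HI.
  rewrite (RInt_is_is_RInt_eq _ _ _ _ _ HI (is_RInt_kern_right gamma c lo hi Hg Hh)).
  assert (0 < Rpower (lo - c) (1 - gamma)) by apply exp_pos.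
  apply Rmult_le_compat_r; [apply Rlt_le, Rinv_0_lt_compat|]; lra.
Qed.

Lemma exists_small_gap lo hi c delta : lo < c < hi -> 0 < delta ->
  exists e, 0 < e < delta /\ lo < c - e /\ c + e < hi.
Proof.
  intros Hc Hd. exists (Rmin (delta / 2) (Rmin ((c - lo) / 2) ((hi - c) / 2))).
  pose proof (Rmin_l (delta / 2) (Rmin ((c - lo) / 2) ((hi - c) / 2))).
  pose proof (Rmin_r (delta / 2) (Rmin ((c - lo) / 2) ((hi - c) / 2))).
  pose proof (Rmin_l ((c - lo) / 2) ((hi - c) / 2)).
  pose proof (Rmin_r ((c - lo) / 2) ((hi - c) / 2)).
  assert (0 < Rmin (delta / 2) (Rmin ((c - lo) / 2) ((hi - c) / 2)))
    by (repeat apply Rmin_glb_lt; lra).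
  lra.
Qed.

Lemma imp_int_le_bound f lo hi c l K : lo < c < hi -> imp_int f lo hi c l ->
  (forall e I1 I2, 0 < e -> lo < c - e -> c + e < hi ->
     RInt_is f lo (c - e) I1 -> RInt_is f (c + e) hi I2 -> I1 + I2 <= K) ->
  l <= K.
Proof.
  intros Hc Hl HK. apply Rnot_lt_le; intros Hlt.
  destruct (Hl (l - K)) as [delta [Hd Hf]]; [lra|].
  destruct (exists_small_gap lo hi c delta Hc Hd) as [e [He [Hlo Hhi]]].
  destruct (Hf e He Hlo Hhi) as [I1 [I2 [H1 [H2 Habs]]]].
  pose proof (HK e I1 I2 (proj1 He) Hlo Hhi H1 H2).
  apply Rabs_def2 in Habs. lra.
Qed.

Lemma RInt_is_le f g lo hi If Ig : lo <= hi -> (forall y, f y <= g y) ->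
  RInt_is f lo hi If -> RInt_is g lo hi Ig -> If <= Ig.
Proof.
  intros Hlh Hfg [pf <-] [pg <-]. apply RiemannInt_P19; auto.
Qed.

Lemma imp_int_le f g lo hi c lf lg : lo < c < hi -> (forall y, f y <= g y) ->
  imp_int f lo hi c lf -> imp_int g lo hi c lg -> lf <= lg.
Proof.
  intros Hc Hfg Hf Hg. apply Rnot_lt_le; intros Hlt.
  destruct (Hf ((lf - lg) / 2)) as [df [Hdf Hf']]; [lra|].
  destruct (Hg ((lf - lg) / 2)) as [dg [Hdg Hg']]; [lra|].
  destruct (exists_small_gap lo hi c (Rmin df dg) Hc) as [e [He [Hlo Hhi]]].
  { apply Rmin_glb_lt; assumption. }
  pose proof (Rmin_l df dg). pose proof (Rmin_r df dg).
  destruct (Hf' e ltac:(lra) Hlo Hhi) as [I1 [I2 [HI1 [HI2 HI]]]].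
  destruct (Hg' e ltac:(lra) Hlo Hhi) as [J1 [J2 [HJ1 [HJ2 HJ]]]].
  pose proof (RInt_is_le f g lo (c - e) I1 J1 ltac:(lra) Hfg HI1 HJ1).
  pose proof (RInt_is_le f g (c + e) hi I2 J2 ltac:(lra) Hfg HI2 HJ2).
  apply Rabs_def2 in HI. apply Rabs_def2 in HJ. lra.
Qed.

Lemma imp_int_kern_le gamma lo hi c l : 0 < gamma < 1 -> lo < c < hi ->
  imp_int (kern gamma c) lo hi c l ->
  l <= 2 * Rpower (hi - lo) (1 - gamma) / (1 - gamma).
Proof.
  intros Hg Hc Hl. apply (imp_int_le_bound _ _ _ _ _ _ Hc Hl).
  intros e I1 I2 He Hlo Hhi H1 H2.
  pose proof (RInt_is_kern_left_le gamma c lo (c - e) I1 Hg ltac:(lra) H1).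
  pose proof (RInt_is_kern_right_le gamma c (c + e) hi I2 Hg ltac:(lra) H2).
  assert (Rpower (c - lo) (1 - gamma) <= Rpower (hi - lo) (1 - gamma))
    by (apply Rle_Rpower_l; lra).
  assert (Rpower (hi - c) (1 - gamma) <= Rpower (hi - lo) (1 - gamma))
    by (apply Rle_Rpower_l; lra).
  assert (0 < / (1 - gamma)) by (apply Rinv_0_lt_compat; lra).
  unfold Rdiv in *. nra.
Qed.

Lemma Rleb_le x y : Rleb x y = true -> x <= y.
Proof. unfold Rleb. destruct (Rle_dec x y); congruence. Qed.

Lemma quad_shape_le_1 h u : 0 < h -> 0 <= u <= h -> u / h * ((2 * u - h) / h) <= 1.
Proof.
  intros Hh Hu. replace ((2 * u - h) / h) with (2 * (u / h) - 1) by (field; lra).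
  assert (0 <= u / h <= 1).
  { split; [apply Rdiv_le_0_compat; lra|].
    apply Rmult_le_reg_r with h; [lra|]. unfold Rdiv. rewrite Rmult_assoc, Rinv_l; lra. }
  nra.
Qed.

Lemma bubble_le_1 h u v : 0 < h -> u + v = h -> 4 * u * v / (h * h) <= 1.
Proof.
  intros Hh Huv. apply Rmult_le_reg_r with (h * h); [nra|].
  unfold Rdiv. rewrite Rmult_assoc, Rinv_l by nra.
  pose proof (pow2_ge_0 (u - v)). nra.
Qed.

Lemma phi_le_1 a b M j y : 0 < hstep a b M -> phi a b M j y <= 1.
Proof.
  intros Hh. unfold phi, phi_int, phi_half, node. cbv zeta.
  set (h := hstep a b M) in *.
  destruct (Nat.even j).
  - set (l := INR (Nat.div2 j)).
    destruct (Rleb a y && Rleb y b && Rleb (a + (l - 1) * h) y && Rleb y (a + l * h)) eqn:E1.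
    { apply andb_true_iff in E1 as [E1 E2]. apply andb_true_iff in E1 as [_ E1].
      apply Rleb_le in E1, E2.
      replace (2 * y - (a + l * h + (a + (l - 1) * h))) with (2 * (y - (a + (l - 1) * h)) - h)
        by ring.
      apply quad_shape_le_1; nra. }
    destruct (Rleb a y && Rleb y b && Rleb (a + l * h) y && Rleb y (a + (l + 1) * h)) eqn:E2;
      [|lra].
    apply andb_true_iff in E2 as [E2 E3]. apply andb_true_iff in E2 as [_ E2].
    apply Rleb_le in E2, E3.
    replace (a + (l + 1) * h + (a + l * h) - 2 * y) with (2 * (a + (l + 1) * h - y) - h) by ring.
    apply quad_shape_le_1; nra.
  - destruct (_ && _); [apply bubble_le_1; [exact Hh|ring]|lra].
Qed.

Lemma phi_kern_le_kern a b M gamma j c y : 0 < hstep a b M ->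
  phi a b M j y * kern gamma c y <= kern gamma c y.
Proof.
  intros Hh. pose proof (phi_le_1 a b M j y Hh).
  assert (0 < kern gamma c y) by (apply Rinv_0_lt_compat, exp_pos). nra.
Qed.

Lemma hstep_pos a b M : a < b -> (1 <= M)%nat -> 0 < hstep a b M.
Proof. intros Hab HM. apply Rdiv_lt_0_compat; [lra|]. apply lt_0_INR. lia. Qed.

Lemma colpt_interior a b M i : a < b -> (1 <= i <= 2 * M - 1)%nat ->
  a < colpt a b M i < b.
Proof.
  intros Hab Hi. unfold colpt, node.
  assert (Hh : 0 < hstep a b M) by (apply hstep_pos; [lra|lia]).
  assert (Eb : b = a + INR M * hstep a b M)
    by (unfold hstep; field; apply not_0_INR; lia).
  assert (1 <= INR i) by (apply (le_INR 1); lia).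
  assert (INR (i + 1) <= INR (2 * M)) by (apply le_INR; lia).
  rewrite plus_INR, mult_INR in *. simpl in *. nra.
Qed.

Lemma collocation_diag_bounds a b gamma M d g i : a < b -> 0 < gamma < 1 ->
  (1 <= i <= 2 * M - 1)%nat ->
  imp_int (fun y => kern gamma (colpt a b M i) y) a b (colpt a b M i) (d i) ->
  imp_int (fun y => phi a b M i y * kern gamma (colpt a b M i) y) a b
          (colpt a b M i) (g i i) ->
  0 <= g i i -> 0 <= Amat d g i i <= Ca a b gamma.
Proof.
  intros Hab Hg Hi Hd Hgii Hpos.
  pose proof (colpt_interior a b M i Hab Hi) as Hc.
  assert (g i i <= d i).
  { refine (imp_int_le _ _ _ _ _ _ _ Hc _ Hgii Hd).
    intros y. apply phi_kern_le_kern, hstep_pos; [lra|lia]. }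
  pose proof (imp_int_kern_le gamma a b (colpt a b M i) (d i) Hg Hc Hd).
  unfold Amat, Ca. rewrite Nat.eqb_refl. lra.
Qed.

Lemma sum1_ext n f g : (forall j, (1 <= j <= n)%nat -> f j = g j) -> sum1 n f = sum1 n g.
Proof.
  induction n; simpl; intros H; [reflexivity|].
  rewrite IHn, H; [reflexivity|lia|intros; apply H; lia].
Qed.

Lemma sum1_le n f g : (forall j, (1 <= j <= n)%nat -> f j <= g j) -> sum1 n f <= sum1 n g.
Proof.
  induction n; simpl; intros H; [lra|].
  apply Rplus_le_compat; [apply IHn; intros; apply H|apply H]; lia.
Qed.

Lemma sum1_nonneg n f : (forall j, (1 <= j <= n)%nat -> 0 <= f j) -> 0 <= sum1 n f.
Proof.
  induction n; simpl; intros H; [lra|].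
  apply Rplus_le_le_0_compat; [apply IHn; intros; apply H|apply H]; lia.
Qed.

Lemma sum1_abs n f : Rabs (sum1 n f) <= sum1 n (fun j => Rabs (f j)).
Proof. induction n; simpl; [rewrite Rabs_R0; lra|]. eapply Rle_trans; [apply Rabs_triang|lra]. Qed.

Lemma sum1_mulr n f c : sum1 n (fun j => f j * c) = sum1 n f * c.
Proof. induction n; simpl; [ring|]. rewrite IHn. ring. Qed.

Lemma sum1_pick n f i : (1 <= i <= n)%nat ->
  sum1 n f = f i + sum1 n (fun j => if Nat.eqb j i then 0 else f j).
Proof.
  induction n; intros Hi; [lia|]. cbn [sum1].
  destruct (Nat.eq_dec i (S n)) as [->|Hne].
  - rewrite Nat.eqb_refl, (sum1_ext n (fun j => if Nat.eqb j (S n) then 0 else f j) f);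
      [ring|].
    intros j Hj. destruct (Nat.eqb_spec j (S n)); [lia|reflexivity].
  - rewrite IHn by lia. destruct (Nat.eqb_spec (S n) i); [lia|ring].
Qed.

Lemma vnorm_nonneg v n : 0 <= vnorm v n.
Proof. induction n; simpl; [lra|]. eapply Rle_trans; [apply IHn|apply Rmax_l]. Qed.

Lemma Rabs_le_vnorm v n j : (1 <= j <= n)%nat -> Rabs (v j) <= vnorm v n.
Proof.
  induction n; intros Hj; [lia|]. simpl.
  destruct (Nat.eq_dec j (S n)) as [->|Hne]; [apply Rmax_r|].
  eapply Rle_trans; [apply IHn; lia|apply Rmax_l].
Qed.

Lemma vnorm_attained v n : (1 <= n)%nat -> exists i, (1 <= i <= n)%nat /\ vnorm v n = Rabs (v i).
Proof.
  induction n; intros Hn; [lia|]. simpl.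
  destruct (Nat.eq_dec n 0) as [->|Hne].
  { exists 1%nat. split; [lia|]. apply Rmax_right, Rabs_pos. }
  destruct IHn as [i [Hi E]]; [lia|].
  destruct (Rle_dec (vnorm v n) (Rabs (v (S n)))).
  - exists (S n). split; [lia|]. apply Rmax_right; assumption.
  - exists i. split; [lia|]. rewrite Rmax_left; lra.
Qed.

Definition offdiag_row_sum (n : nat) (A : nat -> nat -> R) (i : nat) : R :=
  sum1 n (fun j => if Nat.eqb j i then 0 else Rabs (A i j)).

Lemma offdiag_row_sum_nonneg n A i : 0 <= offdiag_row_sum n A i.
Proof. apply sum1_nonneg. intros j _. destruct (Nat.eqb j i); [lra|apply Rabs_pos]. Qed.

Lemma Rabs_offdiag_le n (A : nat -> nat -> R) w i :
  Rabs (sum1 n (fun j => if Nat.eqb j i then 0 else A i j * w j))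
  <= offdiag_row_sum n A i * vnorm w n.
Proof.
  eapply Rle_trans; [apply sum1_abs|]. unfold offdiag_row_sum. rewrite <- sum1_mulr.
  apply sum1_le. intros j Hj. destruct (Nat.eqb j i); [rewrite Rabs_R0; lra|].
  rewrite Rabs_mult. apply Rmult_le_compat_l; [apply Rabs_pos|apply Rabs_le_vnorm; exact Hj].
Qed.

Definition crank_nicolson_step (n : nat) (A : nat -> nat -> R) (t : R) (u v : nat -> R) :=
  forall i, (1 <= i <= n)%nat ->
    u i + t * sum1 n (fun j => A i j * u j) = v i - t * sum1 n (fun j => A i j * v j).

Lemma amplification_le U V x s c : 0 <= s <= x -> x <= c -> 0 <= V ->
  U * (1 + x) <= Rabs (1 - x) * V + s * V + s * U -> U <= (1 + 2 * c) * V.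
Proof.
  intros Hs Hc HV HU.
  assert (Hq : Rabs (1 - x) + s <= (1 + 2 * c) * (1 + x - s)).
  { destruct (Rle_dec x 1).
    - rewrite Rabs_pos_eq by lra. nra.
    - rewrite Rabs_left1 by lra. nra. }
  apply Rmult_le_reg_r with (1 + x - s); [lra|]. nra.
Qed.

Lemma pow_le_exp_mul y k : 0 <= y -> (1 + y) ^ k <= exp (INR k * y).
Proof.
  intros Hy. apply Rle_trans with (exp y ^ k).
  { apply pow_incr. pose proof (exp_ineq1_le y). lra. }
  rewrite <- Rpower_pow by apply exp_pos. unfold Rpower. rewrite ln_exp. lra.
Qed.

Lemma geometric_growth (x : nat -> R) q N : 0 <= q ->
  (forall k, (k < N)%nat -> x (S k) <= q * x k) ->
  forall k, (k <= N)%nat -> x k <= q ^ k * x 0%nat.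
Proof.
  intros Hq Hx. induction k; intros Hk; simpl; [lra|].
  rewrite Rmult_assoc. eapply Rle_trans; [apply Hx; lia|].
  apply Rmult_le_compat_l; [exact Hq|apply IHk; lia].
Qed.

Section CrankNicolson.

Variables (n : nat) (A : nat -> nat -> R) (C : R).
Hypothesis n_pos : (1 <= n)%nat.
Hypothesis A_rows : forall i, (1 <= i <= n)%nat ->
  0 <= A i i <= C /\ offdiag_row_sum n A i <= A i i.

Lemma crank_nicolson_row_estimate t u v i : 0 <= t -> (1 <= i <= n)%nat ->
  crank_nicolson_step n A t u v ->
  Rabs (u i) * (1 + t * A i i)
  <= Rabs (1 - t * A i i) * vnorm v n
     + t * offdiag_row_sum n A i * vnorm v n + t * offdiag_row_sum n A i * vnorm u n.
Proof.
  intros Ht Hi Hstep.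
  destruct (A_rows i Hi) as [[HA0 _] _].
  specialize (Hstep i Hi).
  rewrite (sum1_pick n _ i Hi), (sum1_pick n (fun j => A i j * v j) i Hi) in Hstep.
  set (Ru := sum1 n (fun j => if Nat.eqb j i then 0 else A i j * u j)) in Hstep.
  set (Rv := sum1 n (fun j => if Nat.eqb j i then 0 else A i j * v j)) in Hstep.
  pose proof (Rabs_offdiag_le n A u i) as Hu. pose proof (Rabs_offdiag_le n A v i) as Hv.
  fold Ru in Hu. fold Rv in Hv.
  assert (Hui : u i * (1 + t * A i i) = v i * (1 - t * A i i) + - (t * Rv) + - (t * Ru))
    by lra.
  rewrite <- (Rabs_pos_eq (1 + t * A i i)), <- Rabs_mult, Hui by nra.
  eapply Rle_trans; [apply Rabs_triang|].
  eapply Rle_trans; [apply Rplus_le_compat_r, Rabs_triang|].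
  rewrite !Rabs_Ropp, !Rabs_mult, (Rabs_pos_eq t) by lra.
  pose proof (Rabs_le_vnorm v n i Hi).
  pose proof (Rabs_pos (1 - t * A i i)).
  rewrite !Rmult_assoc. nra.
Qed.

Lemma crank_nicolson_step_vnorm_le t u v : 0 <= t -> crank_nicolson_step n A t u v ->
  vnorm u n <= (1 + 2 * t * C) * vnorm v n.
Proof.
  intros Ht Hstep.
  destruct (vnorm_attained u n n_pos) as [i [Hi Eu]].
  destruct (A_rows i Hi) as [[HA0 HAC] Hoff].
  pose proof (offdiag_row_sum_nonneg n A i).
  rewrite Rmult_assoc.
  apply (amplification_le _ _ (t * A i i) (t * offdiag_row_sum n A i));
    [split; nra|nra|apply vnorm_nonneg|].
  rewrite Eu at 1. exact (crank_nicolson_row_estimate t u v i Ht Hi Hstep).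
Qed.

Theorem crank_nicolson_stable T N (eps : nat -> nat -> R) : 0 < T -> (1 <= N)%nat ->
  (forall k, (1 <= k <= N)%nat ->
     crank_nicolson_step n A (T / INR N / 2) (eps k) (eps (k - 1)%nat)) ->
  forall k, (k <= N)%nat -> vnorm (eps k) n <= exp (T * C) * vnorm (eps 0%nat) n.
Proof.
  intros HT HN Hsteps k Hk.
  assert (HC : 0 <= C) by (destruct (A_rows 1%nat ltac:(lia)) as [[] _]; lra).
  assert (Htau : 0 < T / INR N) by (apply Rdiv_lt_0_compat; [lra|apply lt_0_INR; lia]).
  assert (Hy : 0 <= T / INR N * C) by (apply Rmult_le_pos; lra).
  eapply Rle_trans.
  { apply (geometric_growth (fun k => vnorm (eps k) n) (1 + T / INR N * C) N); [lra| |exact Hk].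
    intros j Hj.
    replace (T / INR N * C) with (2 * (T / INR N / 2) * C) by (field; apply not_0_INR; lia).
    apply crank_nicolson_step_vnorm_le; [lra|].
    replace j with (S j - 1)%nat at 2 by lia. apply Hsteps. lia. }
  apply Rmult_le_compat_r; [apply vnorm_nonneg|].
  apply Rle_trans with ((1 + T / INR N * C) ^ N); [apply Rle_pow; [lra|exact Hk]|].
  eapply Rle_trans; [apply pow_le_exp_mul; exact Hy|].
  right. f_equal. field. apply not_0_INR. lia.
Qed.

End CrankNicolson.

Theorem theorem3p6 (a b gamma : R) (M : nat) (T : R) (N : nat)
  (d : nat -> R) (g : nat -> nat -> R) (eps : nat -> nat -> R) :
  a < b -> 0 < gamma < 1 -> (2 <= M)%nat -> 0 < T -> (1 <= N)%nat ->
  (forall i, (1 <= i <= 2 * M - 1)%nat ->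
     imp_int (fun y => kern gamma (colpt a b M i) y) a b (colpt a b M i) (d i)) ->
  (forall i j, (1 <= i <= 2 * M - 1)%nat -> (1 <= j <= 2 * M - 1)%nat ->
     imp_int (fun y => phi a b M j y * kern gamma (colpt a b M i) y) a b
             (colpt a b M i) (g i j)) ->
  (forall i j, (1 <= i <= 2 * M - 1)%nat -> (1 <= j <= 2 * M - 1)%nat -> 0 < g i j) ->
  (forall i, (1 <= i <= 2 * M - 1)%nat ->
     sum1 (2 * M - 1) (fun j => if Nat.eqb j i then 0 else Rabs (Amat d g i j))
       < Rabs (Amat d g i i)) ->
  (forall k, (1 <= k <= N)%nat -> forall i, (1 <= i <= 2 * M - 1)%nat ->
     eps k i + (T / INR N) / 2 * sum1 (2 * M - 1) (fun j => Amat d g i j * eps k j)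
     = eps (k - 1)%nat i
       - (T / INR N) / 2 * sum1 (2 * M - 1) (fun j => Amat d g i j * eps (k - 1)%nat j)) ->
  forall k, (k <= N)%nat ->
    vnorm (eps k) (2 * M - 1) <= exp (T * Ca a b gamma) * vnorm (eps 0%nat) (2 * M - 1).
Proof.
  intros Hab Hgamma HM HT HN Hd Hg Hpos Hdom Hsteps.
  apply (crank_nicolson_stable (2 * M - 1) (Amat d g) (Ca a b gamma));
    [lia| |exact HT|exact HN|exact Hsteps].
  intros i Hi.
  pose proof (collocation_diag_bounds a b gamma M d g i Hab Hgamma Hi
                (Hd i Hi) (Hg i i Hi Hi) (Rlt_le _ _ (Hpos i i Hi Hi))) as Hdiag.
  pose proof (Hdom i Hi) as Hrow. rewrite Rabs_pos_eq in Hrow by lra.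
  split; [exact Hdiag|]. unfold offdiag_row_sum. lra.
Qed.
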